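(* Let $\Bbbk$ be an algebraically closed field of characteristic zero, $G$ a finite group, $\chi:G\to\Bbbk^\times$ a linear character, $g\in Z(G)$, $n\geq2$ the multiplicative order of $\chi(g)$, and $H$ the $\Bbbk$-algebra generated by $\Bbbk G$ and $z$ with relations $z^n=0$, $zs=\chi(s)sz$ ($s\in G$). Then for each $0\leq m\leq n-1$, the $2^p-1$ ideals $\big(z^m\sum_{i\in S}e_i\big)$, for $S$ ranging over the nonempty subsets of $\{0,1,\dots,p-1\}$, are pairwise distinct.
   Context: $\chi_0,\dots,\chi_{p-1}$ are the irreducible characters of $G$ and $e_i=\frac{\chi_i(1)}{|G|}\sum_{h\in G}\chi_i(h)h^{-1}$ (so $\sum_{i=0}^{p-1}e_i=1$). $(a)$ denotes the two-sided ideal of $H$ generated by $a$. *)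

From HB Require Import structures.
From mathcomp Require Import all_boot all_order all_algebra all_fingroup.
From mathcomp Require Import mxrepresentation center.
Set Implicit Arguments. Unset Strict Implicit. Unset Printing Implicit Defensive.
Import GRing.Theory.
Local Open Scope ring_scope.

(* The algebra H = <kG, z | z^n = 0, z s = chi(s) s z>, realised concretely on
   its standard basis { s z^j : s in G, 0 <= j < n }.  An element is the
   coefficient function (s, j) |-> coefficient of s z^j. *)
Definition Halg (F : fieldType) (gT : finGroupType) (n : nat) :=
  {ffun gT * 'I_n -> F}.

(* multiplication: (s z^i)(t z^j) = chi(t)^i (s t) z^(i+j), which is 0 when i+j >= n *)
Definition Hmul (F : fieldType) (gT : finGroupType) (n : nat) (chi : gT -> F)
  (a b : Halg F gT n) : Halg F gT n :=
  [ffun p : gT * 'I_n =>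
     \sum_(x : gT * 'I_n) \sum_(y : gT * 'I_n)
        if (x.1 * y.1 == p.1)%g && (x.2 + y.2 == p.2 :> nat)%N
        then a x * b y * chi y.1 ^+ x.2 else 0].

Definition Hbasis (F : fieldType) (gT : finGroupType) (n : nat)
  (s : gT) (j : 'I_n) : Halg F gT n :=
  [ffun p : gT * 'I_n => if p == (s, j) then 1 else 0].

Definition in_ideal (F : fieldType) (gT : finGroupType) (n : nat) (chi : gT -> F)
  (a v : Halg F gT n) : Prop :=
  exists s : seq (Halg F gT n * Halg F gT n),
    v = \sum_(p <- s) Hmul chi (Hmul chi p.1 a) p.2.

Definition is_irr_char (F : fieldType) (gT : finGroupType) (phi : {ffun gT -> F}) : Prop :=
  exists d (rG : mx_representation F [set: gT]%G d),
    mx_irreducible rG /\ forall x : gT, phi x = \tr (rG x).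

(* central idempotent e_phi = phi(1)/|G| sum_h phi(h) h^-1, as element of H *)
Definition cidem (F : fieldType) (gT : finGroupType) (n : nat) (phi : {ffun gT -> F})
  : Halg F gT n :=
  [ffun p : gT * 'I_n =>
     if (p.2 : nat) == 0%N
     then phi 1%g / (#|[set: gT]|%:R) * phi (p.1^-1)%g
     else 0].

From HB Require Import structures.
From mathcomp Require Import all_boot all_order all_algebra all_fingroup.
From mathcomp Require Import mxrepresentation center.
From mathcomp Require Import zify ring.
Set Implicit Arguments. Unset Strict Implicit. Unset Printing Implicit Defensive.
Import GRing.Theory.
Local Open Scope ring_scope.

(* Let rho be an irreducible representation of G whose character phi lies in S1
   but not in S2.  Send a in H to rho applied to the z^m-coefficient of a twisted
   by chi^-m; the twist absorbs the scalars chi(t)^m created by moving z^m past t,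
   so x (z^m E) y is sent to a product X * rho0(E) * Y, where rho0 applies rho to
   the z^0-coefficient.  By Schur's orthogonality relations rho0 maps e_psi to 1
   if psi = phi and to 0 otherwise.  Hence the map kills the ideal generated by
   z^m sum_(S2) e_i but not z^m sum_(S1) e_i. *)

Section SchurOrthogonality.

Variables (F : fieldType) (gT : finGroupType) (G : {group gT}) (d1 d2 : nat).
Variables (r1 : mx_representation F G d1) (r2 : mx_representation F G d2).

Lemma mx_rsim_intertwiner (B : 'M_(d2, d1)) :
  mx_irreducible r1 -> mx_irreducible r2 ->
  {in G, forall x, r2 x *m B = B *m r1 x} -> B != 0 -> mx_rsim r2 r1.
Proof.
move=> irr1 irr2 hB nzB.
have fullB : row_full B.
  have modB : mxmodule r1 <<B>>%MS.
    rewrite (eqmx_module _ (genmxE B)).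
    by apply/mxmoduleP => x Gx; rewrite -hB ?submxMl.
  case/mx_irrP: irr1 => _ /(_ _ modB); rewrite /row_full genmxE.
  by apply; rewrite (eqmx_eq0 (genmxE B)).
have freeB : row_free B.
  have modK : mxmodule r2 (kermx B).
    apply/mxmoduleP => x Gx; apply/sub_kermxP.
    by rewrite -mulmxA hB // mulmxA mulmx_ker mul0mx.
  rewrite -kermx_eq0; apply: contraNT nzB => nzK.
  case/mx_irrP: irr2 => _ /(_ _ modK nzK) fullK.
  by rewrite -[B]mul1mx; apply/eqP/sub_kermxP; rewrite sub1mx.
have ed : d2 = d1 by rewrite -(eqP freeB) (eqP fullB).
by exists B.
Qed.

Definition mx_average (A : 'M_(d2, d1)) : 'M_(d2, d1) :=
  \sum_(s in G) r2 s^-1%g *m A *m r1 s.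

Lemma mx_average_intertwines A :
  {in G, forall x, r2 x *m mx_average A = mx_average A *m r1 x}.
Proof.
move=> x Gx; rewrite /mx_average mulmx_sumr mulmx_suml (reindex_inj (mulIg x)) /=.
rewrite (eq_bigl (mem G)) => [|t]; last by rewrite !inE groupMr.
apply: eq_bigr => t Gt.
rewrite !mulmxA -repr_mxM ?groupV ?groupM // invMg mulgA mulgV mul1g.
by rewrite -(mulmxA _ (r1 t)) -repr_mxM.
Qed.

Lemma sum_tr_repr_entry i j :
  (\sum_(s in G) \tr (r2 s^-1%g) *: r1 s) i j
    = \sum_(k < d2) mx_average (delta_mx k i) k j.
Proof.
rewrite summxE.
under eq_bigr => s _ do rewrite mxE /mxtrace mulr_suml.
rewrite exchange_big /=; apply: eq_bigr => k _.
rewrite /mx_average summxE; apply: eq_bigr => s _.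
rewrite -[delta_mx k i](@mul_delta_mx _ d2 1 d1 0 k i) !mulmxA -colE -mulmxA -rowE.
by rewrite mxE big_ord1 !mxE.
Qed.

Lemma repr_orthogonality_rsimN :
  mx_irreducible r1 -> mx_irreducible r2 -> ~ mx_rsim r2 r1 ->
  \sum_(s in G) \tr (r2 s^-1%g) *: r1 s = 0.
Proof.
move=> irr1 irr2 nsim; apply/matrixP => i j; rewrite sum_tr_repr_entry mxE.
apply: big1 => k _; have [-> | nz] := eqVneq (mx_average (delta_mx k i)) 0.
  by rewrite mxE.
by case: nsim; apply: mx_rsim_intertwiner irr1 irr2 (@mx_average_intertwines _) nz.
Qed.

End SchurOrthogonality.

Lemma mxtrace_delta (R : pzSemiRingType) d (k i : 'I_d) :
  \tr (delta_mx k i : 'M[R]_d) = (k == i)%:R.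
Proof.
rewrite /mxtrace (bigD1 k) //= big1 => [|l nlk]; rewrite mxE ?(negbTE nlk) //.
by rewrite eqxx addr0.
Qed.

Lemma repr_orthogonality_irr (F : closedFieldType) (gT : finGroupType)
    (G : {group gT}) d (r : mx_representation F G d) :
  [pchar F] =i pred0 -> mx_irreducible r ->
  \sum_(s in G) \tr (r s^-1%g) *: r s = (#|G|%:R / d%:R) *: 1%:M.
Proof.
move=> char0 irr.
have d_neq0 : d%:R != 0 :> F.
  by rewrite (pcharf0P _).1 // -lt0n; case/mx_irrP: irr.
have average_scalar A : mx_average r r A = (#|G|%:R * \tr A / d%:R)%:M.
  have /is_scalar_mxP [c avgA] : is_scalar_mx (mx_average r r A).
    apply: (mx_abs_irr_cent_scalar (group_closure_closed_field irr)).
    by apply/centgmxP => x Gx; rewrite mx_average_intertwines.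
  have <- : \tr (mx_average r r A) = #|G|%:R * \tr A.
    rewrite /mx_average (big_morph _ (@mxtraceD _ _) (mxtrace0 _ _)).
    rewrite (eq_bigr (fun _ => \tr A)) => [|s Gs]; first by rewrite sumr_const mulr_natl.
    by rewrite mxtrace_mulC mulmxA -repr_mxM ?groupV // mulgV repr_mx1 mul1mx.
  by rewrite avgA mxtrace_scalar -[c *+ d]mulr_natr mulfK.
apply/matrixP => i j; rewrite sum_tr_repr_entry.
under eq_bigr do rewrite average_scalar mxtrace_delta mxE.
rewrite (bigD1 j) //= big1 => [|k nkj]; last by rewrite (negbTE nkj).
by rewrite addr0 eqxx mulr1n !mxE eq_sym mulrAC.
Qed.

Section ZAdicFiltration.

Variables (F : fieldType) (gT : finGroupType) (n : nat) (chi : gT -> F).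

Definition zval_ge (m : nat) (a : Halg F gT n) :=
  forall q : gT * 'I_n, (q.2 < m)%N -> a q = 0.

Lemma zval_geMl m (x w : Halg F gT n) : zval_ge m w -> zval_ge m (Hmul chi x w).
Proof.
move=> wm q qm; rewrite ffunE big1 // => a _; rewrite big1 // => b _.
by case: ifP => // /andP [_ /eqP ab_q]; rewrite wm ?mulr0 ?mul0r //; lia.
Qed.

Lemma zval_geMr m (v y : Halg F gT n) : zval_ge m v -> zval_ge m (Hmul chi v y).
Proof.
move=> vm q qm; rewrite ffunE big1 // => a _; rewrite big1 // => b _.
by case: ifP => // /andP [_ /eqP ab_q]; rewrite vm ?mulr0 ?mul0r //; lia.
Qed.

Lemma zval_ge_Hbasis1 (k : 'I_n) : zval_ge k (Hbasis F 1%g k).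
Proof. by move=> q qk; rewrite ffunE; case: eqP => // q1k; rewrite q1k ltnn in qk. Qed.

End ZAdicFiltration.

Lemma big_pair_snd (M : nmodType) (T1 T2 : finType) (k : T2) (G : T1 * T2 -> M) :
  \sum_(q : T1 * T2 | q.2 == k) G q = \sum_(s : T1) G (s, k).
Proof.
transitivity (\sum_(s : T1) \sum_(j : T2 | j == k) G (s, j)).
  by rewrite pair_big_dep; apply: eq_big => [[s j]|[s j] _].
by apply: eq_bigr => s _; rewrite big_pred1_eq.
Qed.

Section ZComponent.

Variables (F : fieldType) (gT : finGroupType) (n : nat) (chi : gT -> F).
Variables (d : nat) (rho : mx_representation F [set: gT]%G d).

Definition zcomp_mx (k : nat) (f : gT -> F) (a : Halg F gT n) : 'M[F]_d :=
  \sum_(q : gT * 'I_n | q.2 == k :> nat) (a q * f q.1) *: rho q.1.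

Lemma eq_zcomp_mx k (f g : gT -> F) : f =1 g -> zcomp_mx k f =1 zcomp_mx k g.
Proof. by move=> fg a; apply: eq_bigr => q _; rewrite fg. Qed.

Lemma zcomp_mx_sum k f I (r : seq I) (a : I -> Halg F gT n) :
  zcomp_mx k f (\sum_(i <- r) a i) = \sum_(i <- r) zcomp_mx k f (a i).
Proof.
rewrite /zcomp_mx exchange_big; apply: eq_bigr => q _.
by rewrite sum_ffunE mulr_suml scaler_suml.
Qed.

Lemma zcomp_mx_Hbasis1 (k : 'I_n) f : zcomp_mx k f (Hbasis F 1%g k) = f 1%g *: 1%:M.
Proof.
rewrite /zcomp_mx (bigD1 (1%g, k)) //= big1 => [|q /andP [_ nq]].
  by rewrite ffunE eqxx mul1r repr_mx1 addr0.
by rewrite ffunE (negbTE nq) mul0r scale0r.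
Qed.

Lemma zcomp_mx_Hmul (k : 'I_n) f (a b : Halg F gT n) :
  zcomp_mx k f (Hmul chi a b) =
  \sum_(x : gT * 'I_n) \sum_(y : gT * 'I_n) if (x.2 + y.2 == k)%N
     then (a x * b y * chi y.1 ^+ x.2 * f (x.1 * y.1)%g) *: rho (x.1 * y.1)%g
     else 0.
Proof.
rewrite /zcomp_mx (eq_bigr (fun q : gT * 'I_n => \sum_(x : gT * 'I_n) \sum_(y : gT * 'I_n)
   ((if (x.1 * y.1 == q.1)%g && (x.2 + y.2 == q.2 :> nat)%N
     then a x * b y * chi y.1 ^+ x.2 else 0) * f q.1) *: rho q.1)); last first.
  move=> q _; rewrite ffunE mulr_suml scaler_suml.
  by apply: eq_bigr => x _; rewrite mulr_suml scaler_suml.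
rewrite exchange_big; apply: eq_bigr => x _; rewrite exchange_big; apply: eq_bigr => y _.
case: eqP => [xy_k | xy_k]; last first.
  by apply: big1 => q /eqP qk; rewrite qk (introF eqP xy_k) andbF mul0r scale0r.
rewrite (bigD1 ((x.1 * y.1)%g, k)) //= eqxx xy_k eqxx /= big1 ?addr0 // => q /andP [qk].
case: ifP => [/andP [/eqP xy_q _] | _]; last by rewrite mul0r scale0r.
by rewrite xy_q -(ord_inj (eqP qk)) -surjective_pairing eqxx.
Qed.

Hypothesis chiM : {morph chi : s t / (s * t)%g >-> s * t}.

Lemma zcomp_mxMl (m : 'I_n) (f : gT -> F) (x w : Halg F gT n) :
  {morph f : s t / (s * t)%g >-> s * t} -> zval_ge m w ->
  zcomp_mx m f (Hmul chi x w) = zcomp_mx 0 f x *m zcomp_mx m f w.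
Proof.
move=> fM wm; rewrite zcomp_mx_Hmul /zcomp_mx mulmx_suml [RHS]big_mkcond.
apply: eq_bigr => a _; case: eqP => [a0 | a_neq0].
  rewrite mulmx_sumr [RHS]big_mkcond; apply: eq_bigr => b _.
  rewrite a0 add0n; case: ifP => // _.
  rewrite -scalemxAl -scalemxAr scalerA -repr_mxM ?inE // fM.
  by rewrite expr0 mulr1 mulrACA.
apply: big1 => b _; case: ifP => // /eqP ab_m.
by rewrite wm ?mulr0 ?mul0r ?scale0r //; lia.
Qed.

Lemma zcomp_mxMr (m : 'I_n) (f : gT -> F) (v y : Halg F gT n) :
  {morph f : s t / (s * t)%g >-> s * t} -> zval_ge m v ->
  zcomp_mx m f (Hmul chi v y) =
  zcomp_mx m f v *m zcomp_mx 0 (fun s => f s * chi s ^+ m) y.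
Proof.
move=> fM vm; rewrite zcomp_mx_Hmul /zcomp_mx mulmx_suml [RHS]big_mkcond.
apply: eq_bigr => a _; case: eqP => [am | a_neq_m].
  rewrite mulmx_sumr [RHS]big_mkcond; apply: eq_bigr => b _.
  rewrite am (_ : (m + b.2 == m)%N = (b.2 == 0 :> nat)); last by lia.
  case: ifP => // _.
  rewrite -scalemxAl -scalemxAr scalerA -repr_mxM ?inE // fM.
  by congr (_ *: _); ring.
apply: big1 => b _; case: ifP => // /eqP ab_m.
by rewrite vm ?mulr0 ?mul0r ?scale0r //; lia.
Qed.

Hypothesis chi_neq0 : forall s, chi s != 0.

Lemma zcomp_mx_zpow_sandwich (m : 'I_n) (x E y : Halg F gT n) :
  zcomp_mx m (fun s => (chi s ^+ m)^-1)
    (Hmul chi (Hmul chi x (Hmul chi (Hbasis F 1%g m) E)) y) =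
  zcomp_mx 0 (fun s => (chi s ^+ m)^-1) x *m zcomp_mx 0 (fun=> 1) E *m
    zcomp_mx 0 (fun=> 1) y.
Proof.
have chi1 : chi 1%g = 1 by apply: (mulfI (chi_neq0 1%g)); rewrite mulr1 -chiM mulg1.
have twistM : {morph (fun s => (chi s ^+ m)^-1) : s t / (s * t)%g >-> s * t}.
  by move=> s t; rewrite /= chiM exprMn invfM.
have untwist : (fun s => (chi s ^+ m)^-1 * chi s ^+ m) =1 (fun=> 1).
  by move=> s; rewrite mulVf ?expf_neq0.
have zm_m : zval_ge m (Hbasis F 1%g m) := @zval_ge_Hbasis1 F gT n m.
have zval_mid : zval_ge m (Hmul chi x (Hmul chi (Hbasis F 1%g m) E)).
  by apply: zval_geMl; apply: zval_geMr.
rewrite (zcomp_mxMr _ twistM zval_mid) (zcomp_mxMl _ twistM); last exact: zval_geMr.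
rewrite (zcomp_mxMr _ twistM zm_m) zcomp_mx_Hbasis1 chi1 expr1n invr1 scale1r mul1mx.
by rewrite !(eq_zcomp_mx _ untwist).
Qed.

End ZComponent.

Section CentralIdempotents.

Variables (F : closedFieldType) (gT : finGroupType) (n : nat).
Variables (d : nat) (rho : mx_representation F [set: gT]%G d) (phi : {ffun gT -> F}).
Hypotheses (char0 : [pchar F] =i pred0) (n_gt0 : (0 < n)%N).
Hypotheses (rho_irr : mx_irreducible rho) (rho_phi : forall x, phi x = \tr (rho x)).

Lemma zcomp_mx_cidem psi :
  is_irr_char psi -> zcomp_mx rho 0 (fun=> 1) (cidem n psi) = (psi == phi)%:R *: 1%:M.
Proof.
move=> [d' [rho' [rho'_irr rho'_psi]]].
rewrite /zcomp_mx (eq_bigl (fun q => q.2 == Ordinal n_gt0)) // big_pair_snd.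
under eq_bigr do rewrite ffunE /= mulr1 -scalerA.
rewrite -scaler_sumr (eq_bigl (mem [set: gT])) => [|s]; last by rewrite !inE.
have [-> | psi_neq_phi] := eqVneq psi phi.
  under eq_bigr do rewrite rho_phi.
  rewrite repr_orthogonality_irr // scalerA rho_phi repr_mx1 mxtrace1 mulrA mulfVK.
    by rewrite mulfV ?scale1r // (pcharf0P _).1 // -lt0n; case/mx_irrP: rho_irr.
  by rewrite (pcharf0P _).1 // -lt0n cardsT; apply/card_gt0P; exists 1%g.
under eq_bigr do rewrite rho'_psi.
rewrite repr_orthogonality_rsimN ?scaler0 ?scale0r // => rho'_rho.
case/eqP: psi_neq_phi; apply/ffunP => x.
by rewrite rho'_psi rho_phi (mxtrace_rsim rho'_rho) ?inE.
Qed.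

Lemma zcomp_mx_sum_cidem (S : seq {ffun gT -> F}) :
  {in S, forall psi, is_irr_char psi} ->
  zcomp_mx rho 0 (fun=> 1) (\sum_(psi <- S) cidem n psi) = (count_mem phi S)%:R *: 1%:M.
Proof.
move=> S_irr; rewrite zcomp_mx_sum big_seq.
rewrite (eq_bigr _ (fun psi Spsi => zcomp_mx_cidem (S_irr psi Spsi))).
rewrite -big_seq -scaler_suml; congr (_ *: _).
by elim: S {S_irr} => [|psi S IHS]; rewrite ?big_nil ?big_cons ?IHS ?natrD.
Qed.

End CentralIdempotents.

Section IdealsOfIdempotents.

Variables (F : closedFieldType) (gT : finGroupType) (n : nat) (chi : gT -> F).
Hypotheses (char0 : [pchar F] =i pred0) (chiM : {morph chi : s t / (s * t)%g >-> s * t}).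
Hypothesis chi_neq0 : forall s, chi s != 0.

Definition zidem (m : 'I_n) (S : seq {ffun gT -> F}) : Halg F gT n :=
  Hmul chi (Hbasis F 1%g m) (\sum_(phi <- S) cidem n phi).

Lemma zidem_ideal_subset (m : 'I_n) (S1 S2 : seq {ffun gT -> F}) :
  {in S1, forall phi, is_irr_char phi} -> {in S2, forall phi, is_irr_char phi} ->
  (forall v, in_ideal chi (zidem m S1) v -> in_ideal chi (zidem m S2) v) ->
  {subset S1 <= S2}.
Proof.
move=> S1_irr S2_irr sub12 phi S1phi; apply: contraT => S2phiN.
have [d [rho [rho_irr rho_phi]]] := S1_irr phi S1phi.
have n_gt0 : (0 < n)%N by apply: leq_ltn_trans (ltn_ord m).
have d_gt0 : (0 < d)%N by case/mx_irrP: rho_irr.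
have count_neq0 : (count_mem phi S1)%:R != 0 :> F.
  by rewrite (pcharf0P _).1 // -lt0n -has_count has_pred1.
(* [one] is the unit of H: applying the map to [one * a * one] spares us the unit laws. *)
pose one : Halg F gT n := Hbasis F 1%g (Ordinal n_gt0).
pose twist s := (chi s ^+ m)^-1.
have Z_zidem S x y : {in S, forall psi, is_irr_char psi} ->
    zcomp_mx rho m twist (Hmul chi (Hmul chi x (zidem m S)) y) =
    zcomp_mx rho 0 twist x *m ((count_mem phi S)%:R *: 1%:M) *m
      zcomp_mx rho 0 (fun=> 1) y.
  move=> S_irr; rewrite zcomp_mx_zpow_sandwich //.
  by rewrite (zcomp_mx_sum_cidem char0 n_gt0 rho_irr rho_phi S_irr).
have : in_ideal chi (zidem m S1) (Hmul chi (Hmul chi one (zidem m S1)) one).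
  by exists [:: (one, one)]; rewrite big_seq1.
case/sub12 => s /(congr1 (zcomp_mx rho m twist)).
rewrite Z_zidem // zcomp_mx_sum big1 => [|p _]; last first.
  by rewrite Z_zidem // (count_memPn S2phiN) scale0r mulmx0 mul0mx.
rewrite /one !(zcomp_mx_Hbasis1 _ (Ordinal n_gt0)) !scalemx1 -!scalar_mxM.
move=> /matrixP/(_ (Ordinal d_gt0) (Ordinal d_gt0))/eqP; rewrite !mxE eqxx mulr1n mulr1.
by rewrite !mulf_eq0 invr_eq0 expf_eq0 (negbTE (chi_neq0 _)) (negbTE count_neq0) andbF.
Qed.

End IdealsOfIdempotents.

Theorem corollary3p7 (F : closedFieldType) (gT : finGroupType)
  (chi : gT -> F) (g : gT) (n : nat) :
  [pchar F] =i pred0 ->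
  (forall s t : gT, chi (s * t)%g = chi s * chi t) ->
  (forall s : gT, chi s != 0) ->
  (g \in 'Z([set: gT]))%g ->
  (1 < n)%N ->
  n.-primitive_root (chi g) ->
  forall m : 'I_n,
  forall S1 S2 : seq {ffun gT -> F},
    uniq S1 -> uniq S2 -> S1 != [::] -> S2 != [::] ->
    (forall phi, phi \in S1 -> is_irr_char phi) ->
    (forall phi, phi \in S2 -> is_irr_char phi) ->
    (forall v : Halg F gT n,
       in_ideal chi (Hmul chi (Hbasis F 1%g m) (\sum_(phi <- S1) cidem n phi)) v <->
       in_ideal chi (Hmul chi (Hbasis F 1%g m) (\sum_(phi <- S2) cidem n phi)) v) ->
    S1 =i S2.
Proof.
move=> char0 chiM chi_neq0 _ _ _ m S1 S2 _ _ _ _ S1_irr S2_irr eq_ideals phi.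
by apply/idP/idP; apply: (zidem_ideal_subset char0 chiM chi_neq0) => // v /eq_ideals.
Qed.
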